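(* Let $(M,\mathfrak m)$ be a $\mathfrak C$-cowreath with structure maps $\xi,\delta$. If $(X,\mathfrak x)$ is a right $(M,\mathfrak m)$-comodule with coaction $\varrho:\mathfrak C\otimes X\to\mathfrak C\otimes X\otimes M$, then $$\Big(\mathfrak C\otimes X,\ (\mathfrak C\otimes\mathfrak x\otimes M)\circ(\mathfrak C\otimes\varrho)\circ(\Delta\otimes X)\Big)$$ is an object of ${}_A\mathscr M^{\mathfrak C\otimes M}$ (with respect to the coring structure $\Delta'=(\mathfrak C\otimes\mathfrak m\otimes M)(\mathfrak C\otimes\delta)(\Delta\otimes M)$, $\varepsilon'=\varepsilon\circ\xi$ on $\mathfrak C\otimes M$), and every morphism $f:\mathfrak C\otimes X\to\mathfrak C\otimes X'$ of right $(M,\mathfrak m)$-comodules is a morphism in ${}_A\mathscr M^{\mathfrak C\otimes M}$ between the corresponding objects. This defines a faithful functor $\mathscr O$ from the category of right $(M,\mathfrak m)$-comodules to ${}_A\mathscr M^{\mathfrak C\otimes M}$, with $\mathscr O(f)=f$.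
   Context: Fix a commutative ring $\mathbb K$; rings are associative unital $\mathbb K$-algebras, bimodules unital and $\mathbb K$-central. $A$ is a ring, $\otimes=\otimes_A$, canonical unit isomorphisms are suppressed, identity maps are denoted by the objects. $(\mathfrak C,\Delta,\varepsilon)$ is an $A$-coring. For an $A$-coring $\mathfrak D$, ${}_A\mathscr M^{\mathfrak D}$ is the category of right $\mathfrak D$-comodules whose underlying module is an $A$-bimodule with $A$-bilinear coaction; morphisms are $A$-bilinear $\mathfrak D$-colinear maps. $\mathscr R_{(\mathfrak C:A)}$ has objects $(M,\mathfrak m)$, $M$ an $A$-bimodule, $\mathfrak m:\mathfrak C\otimes M\to M\otimes\mathfrak C$ $A$-bilinear with $(M\otimes\Delta)\mathfrak m=(\mathfrak m\otimes\mathfrak C)(\mathfrak C\otimes\mathfrak m)(\Delta\otimes M)$ and $(M\otimes\varepsilon)\mathfrak m=\varepsilon\otimes M$; $\mathfrak C\otimes M$ is a $\mathfrak C$-bicomodule with left coaction $\Delta\otimes M$ and right coaction $(\mathfrak C\otimes\mathfrak m)(\Delta\otimes M)$; morphisms are $\mathfrak C$-bicomodule maps $\mathfrak C\otimes M\to\mathfrak C\otimes M'$. A $\mathfrak C$-cowreath is an object $(M,\mathfrak m)$ with $\mathfrak C$-bicolinear $\xi:\mathfrak C\otimes M\to\mathfrak C$, $\delta:\mathfrak C\otimes M\to\mathfrak C\otimes M\otimes M$ such that $(\xi\otimes M)\delta=\mathfrak C\otimes M$, $(M\otimes\xi)(\mathfrak m\otimes M)\delta=\mathfrak m$, $(\mathfrak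 m\otimes M\otimes M)(\delta\otimes M)\delta=(M\otimes\delta)(\mathfrak m\otimes M)\delta$; then $(\mathfrak C\otimes M,\Delta',\varepsilon')$ is an $A$-coring. A right $(M,\mathfrak m)$-comodule is an object $(X,\mathfrak x)$ of $\mathscr R_{(\mathfrak C:A)}$ with a $\mathfrak C$-bicomodule map $\varrho:\mathfrak C\otimes X\to\mathfrak C\otimes X\otimes M$ (target with left coaction $\Delta\otimes X\otimes M$ and right coaction $(\mathfrak C\otimes X\otimes\mathfrak m)(\mathfrak C\otimes\mathfrak x\otimes M)(\Delta\otimes X\otimes M)$) such that $(X\otimes\xi)(\mathfrak x\otimes M)\varrho=\mathfrak x$ and $(X\otimes\delta)(\mathfrak x\otimes M)\varrho=(\mathfrak x\otimes M\otimes M)(\varrho\otimes M)\varrho$; a morphism of right comodules $(X,\mathfrak x)\to(X',\mathfrak x')$ is a $\mathfrak C$-bicomodule map $f:\mathfrak C\otimes X\to\mathfrak C\otimes X'$ with $\varrho'\circ f=(f\otimes M)\circ\varrho$. *)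

(* The category of K-central A-bimodules with ⊗_A is a (non-strict) monoidal
   category; all constructions of the statement (corings, comodules,
   cowreaths, ...) only use this monoidal structure.  We therefore formalize
   them in an arbitrary monoidal category, with all associativity and unit
   isomorphisms made explicit. *)

Set Implicit Arguments.

Record MonCat := MkMonCat {
  ob :> Type;
  hom : ob -> ob -> Type;
  comp : forall a b c : ob, hom b c -> hom a b -> hom a c;
  idm : forall a : ob, hom a a;
  tens : ob -> ob -> ob;
  tensm : forall a b c d : ob, hom a b -> hom c d -> hom (tens a c) (tens b d);
  unit_ob : ob;
  asc : forall a b c : ob, hom (tens (tens a b) c) (tens a (tens b c));
  asci : forall a b c : ob, hom (tens a (tens b c)) (tens (tens a b) c);
  lu : forall a : ob, hom (tens unit_ob a) a;
  lui : forall a : ob, hom a (tens unit_ob a);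
  ru : forall a : ob, hom (tens a unit_ob) a;
  rui : forall a : ob, hom a (tens a unit_ob);
  comp_assoc : forall a b c d (f : hom c d) (g : hom b c) (h : hom a b),
    comp f (comp g h) = comp (comp f g) h;
  comp_idl : forall a b (f : hom a b), comp (idm b) f = f;
  comp_idr : forall a b (f : hom a b), comp f (idm a) = f;
  tensm_id : forall a b, tensm (idm a) (idm b) = idm (tens a b);
  tensm_comp : forall a1 b1 c1 a2 b2 c2 (f1 : hom b1 c1) (g1 : hom a1 b1)
      (f2 : hom b2 c2) (g2 : hom a2 b2),
    tensm (comp f1 g1) (comp f2 g2) = comp (tensm f1 f2) (tensm g1 g2);
  asc_asci : forall a b c, comp (asc a b c) (asci a b c) = idm _;
  asci_asc : forall a b c, comp (asci a b c) (asc a b c) = idm _;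
  asc_nat : forall a a' b b' c c' (f : hom a a') (g : hom b b') (h : hom c c'),
    comp (asc a' b' c') (tensm (tensm f g) h) = comp (tensm f (tensm g h)) (asc a b c);
  lu_lui : forall a, comp (lu a) (lui a) = idm a;
  lui_lu : forall a, comp (lui a) (lu a) = idm _;
  lu_nat : forall a b (f : hom a b), comp (lu b) (tensm (idm unit_ob) f) = comp f (lu a);
  ru_rui : forall a, comp (ru a) (rui a) = idm a;
  rui_ru : forall a, comp (rui a) (ru a) = idm _;
  ru_nat : forall a b (f : hom a b), comp (ru b) (tensm f (idm unit_ob)) = comp f (ru a);
  pentagon : forall a b c d,
    comp (asc a b (tens c d)) (asc (tens a b) c d)
    = comp (tensm (idm a) (asc b c d)) (comp (asc a (tens b c) d) (tensm (asc a b c) (idm d)));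
  triangle : forall a b,
    comp (tensm (idm a) (lu b)) (asc a unit_ob b) = tensm (ru a) (idm b)
}.

Arguments hom {m}.
Arguments comp {m a b c}.
Arguments idm {m}.
Arguments tens {m}.
Arguments tensm {m a b c d}.
Arguments unit_ob {m}.
Arguments asc {m}.
Arguments asci {m}.
Arguments lu {m}.
Arguments ru {m}.

Declare Scope moncat_scope.
Local Open Scope moncat_scope.
Local Notation "g ∘ f" := (comp g f) (at level 40, left associativity) : moncat_scope.
Local Notation "a ⊗ b" := (tens a b) (at level 35, right associativity) : moncat_scope.
Local Notation "f ⊗' g" := (tensm f g) (at level 35, right associativity) : moncat_scope.

Section Defs.
Context {V : MonCat}.

(* Right D-comodules (objects of _A M^D): coassociativity and counitality *)
Definition is_rcomod {D : V} (ΔD : hom D (D ⊗ D)) (εD : hom D unit_ob)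
    {N : V} (r : hom N (N ⊗ D)) : Prop :=
  asc N D D ∘ (r ⊗' idm D) ∘ r = (idm N ⊗' ΔD) ∘ r /\
  ru N ∘ (idm N ⊗' εD) ∘ r = idm N.

Definition is_rcomod_map {D : V} {N N' : V} (r : hom N (N ⊗ D)) (r' : hom N' (N' ⊗ D))
    (f : hom N N') : Prop :=
  r' ∘ f = (f ⊗' idm D) ∘ r.

Context {C : V} (Δ : hom C (C ⊗ C)) (ε : hom C unit_ob).

Definition is_coring : Prop :=
  asc C C C ∘ (Δ ⊗' idm C) ∘ Δ = (idm C ⊗' Δ) ∘ Δ /\
  lu C ∘ (ε ⊗' idm C) ∘ Δ = idm C /\
  ru C ∘ (idm C ⊗' ε) ∘ Δ = idm C.

Definition bicolin {N N' : V} (l : hom N (C ⊗ N)) (r : hom N (N ⊗ C))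
    (l' : hom N' (C ⊗ N')) (r' : hom N' (N' ⊗ C)) (f : hom N N') : Prop :=
  l' ∘ f = (idm C ⊗' f) ∘ l /\ r' ∘ f = (f ⊗' idm C) ∘ r.

Definition lcoact (Y : V) : hom (C ⊗ Y) (C ⊗ (C ⊗ Y)) :=
  asc C C Y ∘ (Δ ⊗' idm Y).

Definition rcoact {Y : V} (y : hom (C ⊗ Y) (Y ⊗ C)) : hom (C ⊗ Y) ((C ⊗ Y) ⊗ C) :=
  asci C Y C ∘ (idm C ⊗' y) ∘ asc C C Y ∘ (Δ ⊗' idm Y).

Definition isR (M : V) (m : hom (C ⊗ M) (M ⊗ C)) : Prop :=
  (idm M ⊗' Δ) ∘ m
    = asc M C C ∘ (m ⊗' idm C) ∘ asci C M C ∘ (idm C ⊗' m) ∘ asc C C M ∘ (Δ ⊗' idm M) /\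
  ru M ∘ (idm M ⊗' ε) ∘ m = lu M ∘ (ε ⊗' idm M).

Definition isR_map {X X' : V} (x : hom (C ⊗ X) (X ⊗ C)) (x' : hom (C ⊗ X') (X' ⊗ C))
    (f : hom (C ⊗ X) (C ⊗ X')) : Prop :=
  bicolin (lcoact X) (rcoact x) (lcoact X') (rcoact x') f.

Definition tensdl {X M : V} (x : hom (C ⊗ X) (X ⊗ C)) (m : hom (C ⊗ M) (M ⊗ C)) :
    hom (C ⊗ (X ⊗ M)) ((X ⊗ M) ⊗ C) :=
  asci X M C ∘ (idm X ⊗' m) ∘ asc X C M ∘ (x ⊗' idm M) ∘ asci C X M.

Context {M : V} (m : hom (C ⊗ M) (M ⊗ C))
        (ξ : hom (C ⊗ M) C) (δ : hom (C ⊗ M) (C ⊗ (M ⊗ M))).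

Definition is_cowreath : Prop :=
  isR M m /\
  bicolin (lcoact M) (rcoact m) Δ Δ ξ /\
  bicolin (lcoact M) (rcoact m) (lcoact (M ⊗ M)) (rcoact (tensdl m m)) δ /\
  (ξ ⊗' idm M) ∘ asci C M M ∘ δ = idm (C ⊗ M) /\
  (idm M ⊗' ξ) ∘ asc M C M ∘ (m ⊗' idm M) ∘ asci C M M ∘ δ = m /\
  asc M C (M ⊗ M) ∘ (m ⊗' idm (M ⊗ M)) ∘ asc (C ⊗ M) M M ∘ (asci C M M ⊗' idm M)
      ∘ (δ ⊗' idm M) ∘ asci C M M ∘ δ
    = (idm M ⊗' δ) ∘ asc M C M ∘ (m ⊗' idm M) ∘ asci C M M ∘ δ.

Definition Dprime : hom (C ⊗ M) ((C ⊗ M) ⊗ (C ⊗ M)) :=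
  asci C M (C ⊗ M) ∘ (idm C ⊗' asc M C M) ∘ (idm C ⊗' (m ⊗' idm M))
    ∘ (idm C ⊗' asci C M M) ∘ (idm C ⊗' δ) ∘ asc C C M ∘ (Δ ⊗' idm M).

Definition eprime : hom (C ⊗ M) unit_ob := ε ∘ ξ.

Definition is_rMcomod {X : V} (x : hom (C ⊗ X) (X ⊗ C)) (ρ : hom (C ⊗ X) (C ⊗ (X ⊗ M))) : Prop :=
  isR X x /\
  bicolin (lcoact X) (rcoact x) (lcoact (X ⊗ M)) (rcoact (tensdl x m)) ρ /\
  (idm X ⊗' ξ) ∘ asc X C M ∘ (x ⊗' idm M) ∘ asci C X M ∘ ρ = x /\
  (idm X ⊗' δ) ∘ asc X C M ∘ (x ⊗' idm M) ∘ asci C X M ∘ ρ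
    = asc X C (M ⊗ M) ∘ (x ⊗' idm (M ⊗ M)) ∘ asc (C ⊗ X) M M ∘ (asci C X M ⊗' idm M)
        ∘ (ρ ⊗' idm M) ∘ asci C X M ∘ ρ.

Definition is_rMcomod_map {X X' : V} (x : hom (C ⊗ X) (X ⊗ C)) (x' : hom (C ⊗ X') (X' ⊗ C))
    (ρ : hom (C ⊗ X) (C ⊗ (X ⊗ M))) (ρ' : hom (C ⊗ X') (C ⊗ (X' ⊗ M)))
    (f : hom (C ⊗ X) (C ⊗ X')) : Prop :=
  isR_map x x' f /\
  ρ' ∘ f = asc C X' M ∘ (f ⊗' idm M) ∘ asci C X M ∘ ρ.

Definition Ocoact {X : V} (x : hom (C ⊗ X) (X ⊗ C)) (ρ : hom (C ⊗ X) (C ⊗ (X ⊗ M))) :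
    hom (C ⊗ X) ((C ⊗ X) ⊗ (C ⊗ M)) :=
  asci C X (C ⊗ M) ∘ (idm C ⊗' asc X C M) ∘ (idm C ⊗' (x ⊗' idm M))
    ∘ (idm C ⊗' asci C X M) ∘ (idm C ⊗' ρ) ∘ asc C C X ∘ (Δ ⊗' idm X).

End Defs.

(* Put A := (X ⊗ m)(x ⊗ M)ρ : C ⊗ X -> X ⊗ (C ⊗ M).  The coaction (C ⊗ x ⊗ M)(C ⊗ ρ)(Δ ⊗ X)
   is the cofree extension (C ⊗ A)(Δ ⊗ X) of A, and by coassociativity of Δ such an
   extension is coassociative as soon as A is coassociative relative to Δ', i.e.
   (A ⊗ C ⊗ M) ∘ (cofree extension of A) = (X ⊗ Δ')A.  The latter follows from the
   compatibility of x with Δ, the δ-axiom and the two colinearity conditions on ρ.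
   Counitality reduces through the ξ-axiom to the counit laws of x and Δ.  Left
   colinearity of ρ rewrites the coaction as (ϱ_x ⊗ M)ρ, with ϱ_x the right C-coaction
   of C ⊗ X, so both colinearity conditions on a morphism f make it colinear. *)


Local Notation "g ∘ f" := (comp g f) (at level 40, left associativity).
Local Notation "a ⊗ b" := (tens a b) (at level 35, right associativity).
Local Notation "f ⊗' g" := (tensm f g) (at level 35, right associativity).

(* Composites are left-associated, so [q ∘ p1 ∘ ... ∘ pn] is a subterm whenever
   [p1, ..., pn] is a segment of a longer composite; these lemmas let [rewrite]
   act on such segments. *)
Section SegmentRewriting.
Context {V : MonCat}.

Lemma comp_seg2 {b c d e : V} {p1 : hom c d} {p2 : hom b c} {r : hom b d} :
  p1 ∘ p2 = r -> forall q : hom d e, q ∘ p1 ∘ p2 = q ∘ r.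
Proof. intros <- q; rewrite comp_assoc; reflexivity. Qed.

Lemma comp_seg3 {b c d e f : V} {p1 : hom d e} {p2 : hom c d} {p3 : hom b c}
    {r : hom b e} :
  p1 ∘ p2 ∘ p3 = r -> forall q : hom e f, q ∘ p1 ∘ p2 ∘ p3 = q ∘ r.
Proof. intros <- q; rewrite !comp_assoc; reflexivity. Qed.

Lemma comp_seg4 {b c d e f g : V} {p1 : hom e f} {p2 : hom d e} {p3 : hom c d}
    {p4 : hom b c} {r : hom b f} :
  p1 ∘ p2 ∘ p3 ∘ p4 = r -> forall q : hom f g, q ∘ p1 ∘ p2 ∘ p3 ∘ p4 = q ∘ r.
Proof. intros <- q; rewrite !comp_assoc; reflexivity. Qed.

Lemma comp_seg5 {b c d e f g h : V} {p1 : hom f g} {p2 : hom e f} {p3 : hom d e}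
    {p4 : hom c d} {p5 : hom b c} {r : hom b g} :
  p1 ∘ p2 ∘ p3 ∘ p4 ∘ p5 = r ->
  forall q : hom g h, q ∘ p1 ∘ p2 ∘ p3 ∘ p4 ∘ p5 = q ∘ r.
Proof. intros <- q; rewrite !comp_assoc; reflexivity. Qed.

Lemma comp_seg6 {b c d e f g h i : V} {p1 : hom g h} {p2 : hom f g} {p3 : hom e f}
    {p4 : hom d e} {p5 : hom c d} {p6 : hom b c} {r : hom b h} :
  p1 ∘ p2 ∘ p3 ∘ p4 ∘ p5 ∘ p6 = r ->
  forall q : hom h i, q ∘ p1 ∘ p2 ∘ p3 ∘ p4 ∘ p5 ∘ p6 = q ∘ r.
Proof. intros <- q; rewrite !comp_assoc; reflexivity. Qed.

Lemma comp_seg7 {b c d e f g h i j : V} {p1 : hom h i} {p2 : hom g h} {p3 : hom f g}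
    {p4 : hom e f} {p5 : hom d e} {p6 : hom c d} {p7 : hom b c} {r : hom b i} :
  p1 ∘ p2 ∘ p3 ∘ p4 ∘ p5 ∘ p6 ∘ p7 = r ->
  forall q : hom i j, q ∘ p1 ∘ p2 ∘ p3 ∘ p4 ∘ p5 ∘ p6 ∘ p7 = q ∘ r.
Proof. intros <- q; rewrite !comp_assoc; reflexivity. Qed.

End SegmentRewriting.

Ltac normalize_comp :=
  repeat (rewrite comp_assoc || rewrite comp_idl || rewrite comp_idr || rewrite tensm_id).
Ltac seg_rewrite H :=
  first [ rewrite (comp_seg2 H) | rewrite (comp_seg3 H) | rewrite (comp_seg4 H)
        | rewrite (comp_seg5 H) | rewrite (comp_seg6 H) | rewrite (comp_seg7 H)
        | rewrite H ]; normalize_comp.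
Tactic Notation "rw" open_constr(H) := seg_rewrite H.
Tactic Notation "rw" "<-" open_constr(H) := seg_rewrite (eq_sym H).

Section TensorFunctoriality.
Context {V : MonCat}.

Lemma tensm_comp_l (a b c d : V) (f : hom b c) (g : hom a b) :
  (f ⊗' idm d) ∘ (g ⊗' idm d) = (f ∘ g) ⊗' idm d.
Proof. rewrite <- tensm_comp, comp_idl; reflexivity. Qed.

Lemma tensm_comp_r (a b c d : V) (f : hom b c) (g : hom a b) :
  (idm d ⊗' f) ∘ (idm d ⊗' g) = idm d ⊗' (f ∘ g).
Proof. rewrite <- tensm_comp, comp_idl; reflexivity. Qed.

Lemma tensm_swap (a a' b b' : V) (f : hom a a') (g : hom b b') :
  (f ⊗' idm b') ∘ (idm a ⊗' g) = (idm a' ⊗' g) ∘ (f ⊗' idm b).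
Proof. rewrite <- !tensm_comp, !comp_idl, !comp_idr; reflexivity. Qed.

End TensorFunctoriality.

Ltac expand_tensm :=
  repeat (rw <- (tensm_comp_l _ _ _ _ _ _) || rw <- (tensm_comp_r _ _ _ _ _ _)).

Section Coherence.
Context {V : MonCat}.

Lemma asc_nat_l (a a' b c : V) (f : hom a a') :
  (f ⊗' idm (b ⊗ c)) ∘ asc a b c = asc a' b c ∘ ((f ⊗' idm b) ⊗' idm c).
Proof. rewrite asc_nat, tensm_id; reflexivity. Qed.

Lemma asc_nat_r (a b c c' : V) (h : hom c c') :
  asc a b c' ∘ (idm (a ⊗ b) ⊗' h) = (idm a ⊗' (idm b ⊗' h)) ∘ asc a b c.
Proof. rewrite <- (tensm_id V a b), asc_nat; reflexivity. Qed.

Lemma asci_nat (a a' b b' c c' : V) (f : hom a a') (g : hom b b') (h : hom c c') :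
  asci a' b' c' ∘ (f ⊗' (g ⊗' h)) = ((f ⊗' g) ⊗' h) ∘ asci a b c.
Proof.
  rewrite <- (comp_idr V _ _ (asci a' b' c' ∘ _)), <- (asc_asci V a b c). normalize_comp.
  rw <- (asc_nat V _ _ _ _ _ _ _ _ _). rw (asci_asc V _ _ _). reflexivity.
Qed.

Lemma asci_nat_r (a b c c' : V) (h : hom c c') :
  asci a b c' ∘ (idm a ⊗' (idm b ⊗' h)) = (idm (a ⊗ b) ⊗' h) ∘ asci a b c.
Proof. rewrite asci_nat, tensm_id; reflexivity. Qed.

Lemma pentagon_l (a b c d : V) :
  asc a b (c ⊗ d) ∘ asc (a ⊗ b) c d
  = (idm a ⊗' asc b c d) ∘ asc a (b ⊗ c) d ∘ (asc a b c ⊗' idm d).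
Proof. rewrite pentagon. normalize_comp. reflexivity. Qed.

Lemma pentagon_asci_l (a b c d : V) :
  asc (a ⊗ b) c d ∘ (asci a b c ⊗' idm d)
  = asci a b (c ⊗ d) ∘ (idm a ⊗' asc b c d) ∘ asc a (b ⊗ c) d.
Proof.
  rewrite <- (comp_idl V _ _ (asc (a ⊗ b) c d ∘ _)), <- (asci_asc V a b (c ⊗ d)). normalize_comp.
  rw (pentagon_l _ _ _ _). rw (tensm_comp_l _ _ _ _ _ _). rw (asc_asci V _ _ _).
  reflexivity.
Qed.

Lemma pentagon_asci_r (a b c d : V) :
  asc a (b ⊗ c) d ∘ (asc a b c ⊗' idm d) ∘ asci (a ⊗ b) c d
  = (idm a ⊗' asci b c d) ∘ asc a b (c ⊗ d).
Proof.
  rewrite <- (comp_idl V _ _ (asc a (b ⊗ c) d ∘ _ ∘ _)).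
  rewrite <- (tensm_id V a ((b ⊗ c) ⊗ d)), <- (asci_asc V b c d), <- tensm_comp_r.
  normalize_comp. rw <- (pentagon_l _ _ _ _). rw (asc_asci V _ _ _). reflexivity.
Qed.

Lemma pentagon_inv (a b c d : V) :
  asci (a ⊗ b) c d ∘ asci a b (c ⊗ d)
  = (asci a b c ⊗' idm d) ∘ asci a (b ⊗ c) d ∘ (idm a ⊗' asci b c d).
Proof.
  assert (E : (asci a b c ⊗' idm d) ∘ asci a (b ⊗ c) d ∘ (idm a ⊗' asci b c d)
     ∘ (idm a ⊗' asc b c d) ∘ asc a (b ⊗ c) d ∘ (asc a b c ⊗' idm d) = idm _).
  { rw (tensm_comp_r _ _ _ _ (asci b c d) (asc b c d)).
    rw (asci_asc V _ _ _). rw (asci_asc V _ _ _).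
    rw (tensm_comp_l _ _ _ _ _ _). rw (asci_asc V _ _ _). reflexivity. }
  rewrite <- (comp_idl V _ _ (asci (a ⊗ b) c d ∘ _)), <- E. normalize_comp.
  rw <- (pentagon_l _ _ _ _). rw (asc_asci V _ _ _). rw (asc_asci V _ _ _). reflexivity.
Qed.

Lemma pentagon_inv_l (a b c d : V) :
  (asc a b c ⊗' idm d) ∘ asci (a ⊗ b) c d ∘ asci a b (c ⊗ d)
  = asci a (b ⊗ c) d ∘ (idm a ⊗' asci b c d).
Proof.
  rw (pentagon_inv _ _ _ _). rw (tensm_comp_l _ _ _ _ _ _). rw (asc_asci V _ _ _).
  reflexivity.
Qed.

Lemma tensm_unit_inj (a b : V) (f g : hom a b) :
  f ⊗' idm unit_ob = g ⊗' idm unit_ob -> f = g.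
Proof.
  intro H. rewrite <- (comp_idr V _ _ f), <- (comp_idr V _ _ g), <- (ru_rui V a).
  rewrite !comp_assoc, <- !ru_nat, H. reflexivity.
Qed.

(* Kelly's coherence consequence of the triangle and pentagon axioms. *)
Lemma ru_asci (a b : V) : ru (a ⊗ b) ∘ asci a b unit_ob = idm a ⊗' ru b.
Proof.
  assert (K : asc a b unit_ob ∘ (ru (a ⊗ b) ⊗' idm unit_ob)
             = asc a b unit_ob ∘ (((idm a ⊗' ru b) ∘ asc a b unit_ob) ⊗' idm unit_ob)).
  { rewrite <- (triangle V (a ⊗ b) unit_ob), <- (tensm_id V a b).
    rewrite comp_assoc, asc_nat, <- comp_assoc, pentagon_l. normalize_comp.
    rw (tensm_comp_r _ _ _ _ (idm b ⊗' lu unit_ob) (asc b unit_ob unit_ob)).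
    rw (triangle V _ _).
    rw <- (asc_nat V _ _ _ _ _ _ (idm a) (ru b) (idm unit_ob)). expand_tensm. reflexivity. }
  assert (H : ru (a ⊗ b) = (idm a ⊗' ru b) ∘ asc a b unit_ob).
  { apply tensm_unit_inj.
    rewrite <- (comp_idl V _ _ (ru (a ⊗ b) ⊗' idm unit_ob)), <- (asci_asc V a b unit_ob).
    rewrite <- comp_assoc, K. normalize_comp. rw (asci_asc V _ _ _). reflexivity. }
  rewrite H, <- comp_assoc, asc_asci, comp_idr. reflexivity.
Qed.

End Coherence.

Section Corings.
Context {V : MonCat} {C : V} (Δ : hom C (C ⊗ C)).

Lemma lcoact_tens (Y Z : V) :
  asc C C (Y ⊗ Z) ∘ (Δ ⊗' idm (Y ⊗ Z))
  = (idm C ⊗' asc C Y Z) ∘ asc C (C ⊗ Y) Z ∘ (asc C C Y ⊗' idm Z)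
      ∘ ((Δ ⊗' idm Y) ⊗' idm Z) ∘ asci C Y Z.
Proof.
  rw <- (pentagon_l _ _ _ _). rw (asc_nat V _ _ _ _ _ _ _ _ _). rw (asc_asci V _ _ _).
  reflexivity.
Qed.

(* The cofree extension of [A]; for [D = C] and [A = x] it is [rcoact Δ x]. *)
Definition lift_coact {X D : V} (A : hom (C ⊗ X) (X ⊗ D)) : hom (C ⊗ X) ((C ⊗ X) ⊗ D) :=
  asci C X D ∘ (idm C ⊗' A) ∘ asc C C X ∘ (Δ ⊗' idm X).

Hypothesis Δ_coassoc : asc C C C ∘ (Δ ⊗' idm C) ∘ Δ = (idm C ⊗' Δ) ∘ Δ.

Lemma Δ_tens_coassoc (X : V) :
  (Δ ⊗' idm (C ⊗ X)) ∘ asc C C X ∘ (Δ ⊗' idm X)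
  = asci C C (C ⊗ X) ∘ (idm C ⊗' asc C C X) ∘ (idm C ⊗' (Δ ⊗' idm X))
      ∘ asc C C X ∘ (Δ ⊗' idm X).
Proof.
  assert (H : (Δ ⊗' idm C) ∘ Δ = asci C C C ∘ (idm C ⊗' Δ) ∘ Δ).
  { rw <- Δ_coassoc. rw (asci_asc V _ _ _). reflexivity. }
  rw (asc_nat_l _ _ _ _ Δ). rw (tensm_comp_l _ _ _ _ _ _). rewrite H. expand_tensm.
  rw (pentagon_asci_l _ _ _ _). rw (asc_nat V _ _ _ _ _ _ _ _ _). reflexivity.
Qed.

Lemma lift_coact_twice {X D : V} (A : hom (C ⊗ X) (X ⊗ D)) :
  asc (C ⊗ X) D D ∘ (lift_coact A ⊗' idm D) ∘ lift_coact A
  = asci C X (D ⊗ D) ∘ (idm C ⊗' (asc X D D ∘ (A ⊗' idm D) ∘ lift_coact A))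
      ∘ asc C C X ∘ (Δ ⊗' idm X).
Proof.
  unfold lift_coact. expand_tensm.
  rw <- (asci_nat _ _ _ _ _ _ Δ (idm X) (idm D)).
  rw (tensm_swap _ _ _ _ Δ A). rw (Δ_tens_coassoc X).
  rw <- (asci_nat_r _ _ _ _ A). rw (pentagon_inv_l _ _ _ _).
  rw <- (asci_nat _ _ _ _ _ _ (idm C) A (idm D)).
  rw (pentagon_asci_l _ _ _ _). rw (asc_asci V _ _ _).
  repeat rw (tensm_comp_r _ _ _ _ _ _). reflexivity.
Qed.

Lemma lift_coact_coassoc {X D : V} (A : hom (C ⊗ X) (X ⊗ D)) (ΔD : hom D (D ⊗ D)) :
  asc X D D ∘ (A ⊗' idm D) ∘ lift_coact A = (idm X ⊗' ΔD) ∘ A ->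
  asc (C ⊗ X) D D ∘ (lift_coact A ⊗' idm D) ∘ lift_coact A
  = (idm (C ⊗ X) ⊗' ΔD) ∘ lift_coact A.
Proof.
  intro HA. rewrite lift_coact_twice, HA. unfold lift_coact. normalize_comp.
  rw <- (asci_nat_r _ _ _ _ ΔD). rw (tensm_comp_r _ _ _ _ (idm X ⊗' ΔD) A). reflexivity.
Qed.

End Corings.

Lemma twisted_coassoc_core {V : MonCat} {C X M : V} (Δ : hom C (C ⊗ C))
    (m : hom (C ⊗ M) (M ⊗ C)) (δ : hom (C ⊗ M) (C ⊗ (M ⊗ M)))
    (x : hom (C ⊗ X) (X ⊗ C)) (r : hom (C ⊗ X) ((C ⊗ X) ⊗ M))
    (R : hom (C ⊗ X) ((C ⊗ X) ⊗ C)) (L : hom (C ⊗ X) (C ⊗ (C ⊗ X))) :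
  (idm X ⊗' Δ) ∘ x = asc X C C ∘ (x ⊗' idm C) ∘ R ->
  (r ⊗' idm C) ∘ R
    = asci (C ⊗ X) M C ∘ (idm (C ⊗ X) ⊗' m) ∘ asc (C ⊗ X) C M ∘ (R ⊗' idm M) ∘ r ->
  (idm X ⊗' δ) ∘ asc X C M ∘ (x ⊗' idm M) ∘ r
    = asc X C (M ⊗ M) ∘ (x ⊗' idm (M ⊗ M)) ∘ asc (C ⊗ X) M M ∘ (r ⊗' idm M) ∘ r ->
  (L ⊗' idm M) ∘ r = asci C (C ⊗ X) M ∘ (idm C ⊗' r) ∘ L ->
  asc (C ⊗ X) C M ∘ (R ⊗' idm M) ∘ r
    = asci C X (C ⊗ M) ∘ (idm C ⊗' asc X C M) ∘ (idm C ⊗' (x ⊗' idm M))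
        ∘ (idm C ⊗' r) ∘ L ->
  R = asci C X C ∘ (idm C ⊗' x) ∘ L ->
  asc X (C ⊗ M) (C ⊗ M) ∘ ((asc X C M ∘ (x ⊗' idm M) ∘ r) ⊗' idm (C ⊗ M))
    ∘ asc (C ⊗ X) C M ∘ (R ⊗' idm M) ∘ r
  = (idm X ⊗' Dprime Δ m δ) ∘ asc X C M ∘ (x ⊗' idm M) ∘ r.
Proof.
  intros x_Δ r_rcolin r_δ r_lcolin R_r R_lift.
  rewrite <- (tensm_comp_l _ _ _ _ (asc X C M ∘ (x ⊗' idm M)) r).
  rw <- (tensm_comp_l _ _ _ _ (asc X C M) (x ⊗' idm M)).
  rw (asc_nat_l _ _ _ _ r). rw (tensm_comp_l _ _ _ _ (r ⊗' idm C) R).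
  rewrite r_rcolin. expand_tensm.
  rewrite R_lift. expand_tensm.
  rw (asc_nat_l _ _ _ _ (x ⊗' idm M)).
  rw (tensm_comp_l _ _ _ _ ((x ⊗' idm M) ⊗' idm C) (asci (C ⊗ X) M C)).
  rw <- (asci_nat _ _ _ _ _ _ x (idm M) (idm C)). expand_tensm.
  rw (tensm_comp_l _ _ _ _ (x ⊗' idm (M ⊗ C)) (idm (C ⊗ X) ⊗' m)).
  rw (tensm_swap _ _ _ _ x m). expand_tensm.
  rw (tensm_comp_l _ _ _ _ (x ⊗' idm (C ⊗ M)) (asc (C ⊗ X) C M)).
  rw (asc_nat_l _ _ _ _ x). expand_tensm.
  assert (r_lcolin' : (idm C ⊗' r) ∘ L = asc C (C ⊗ X) M ∘ (L ⊗' idm M) ∘ r).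
  { rw r_lcolin. rw (asc_asci V _ _ _). reflexivity. }
  unfold Dprime. expand_tensm.
  rw <- (asc_nat V _ _ _ _ _ _ (idm X) Δ (idm M)).
  rw (tensm_comp_l _ _ _ _ (idm X ⊗' Δ) x). rewrite x_Δ. expand_tensm.
  rw <- (pentagon_l _ _ _ _).
  rw <- (asc_nat_r _ _ _ _ δ).
  rw <- (asc_nat_l _ _ _ _ x). rw <- (tensm_swap _ _ _ _ x δ).
  rw R_r. rw <- (asci_nat_r _ _ _ _ δ).
  do 3 rw (tensm_comp_r _ _ _ _ _ _). rewrite r_δ. expand_tensm.
  rw r_lcolin'. rw <- (asc_nat V _ _ _ _ _ _ (idm C) r (idm M)).
  rw (tensm_comp_l _ _ _ _ (idm C ⊗' r) L). rewrite r_lcolin'. expand_tensm.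
  rw <- (pentagon_l _ _ _ _).
  rw <- (asc_nat V _ _ _ _ _ _ (idm C) x (idm (M ⊗ M))).
  rw (asc_nat_l _ _ _ _ (idm C ⊗' x)).
  rw <- (pentagon_asci_l _ _ _ _). rw (asc_nat_l _ _ _ _ (asci C X C)).
  rw (asc_nat_l _ _ _ _ x). rw (asc_nat_l _ _ _ _ (x ⊗' idm C)).
  rw <- (asc_nat_r _ _ _ _ (asci C M M)). rw (pentagon_l _ _ _ _).
  rw (tensm_comp_r _ _ _ _ (asci C M M) (asc C M M)). rw (asci_asc V _ _ _).
  rw <- (asc_nat_r _ _ _ _ (m ⊗' idm M)).
  rw <- (asc_nat V _ _ _ _ _ _ (idm (X ⊗ C)) m (idm M)).
  rw (pentagon_asci_l _ _ _ _). rw (pentagon_asci_r _ _ _ _).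
  rw (asc_nat_r _ _ _ _ (asc M C M)).
  reflexivity.
Qed.

Section ComoduleCoaction.
Context {V : MonCat} {C : V} (Δ : hom C (C ⊗ C)) {X M : V}
  (x : hom (C ⊗ X) (X ⊗ C)) (ρ : hom (C ⊗ X) (C ⊗ (X ⊗ M))).

Definition twisted_coact : hom (C ⊗ X) (X ⊗ (C ⊗ M)) :=
  asc X C M ∘ (x ⊗' idm M) ∘ asci C X M ∘ ρ.

Lemma Ocoact_lift : Ocoact Δ x ρ = lift_coact Δ twisted_coact.
Proof. unfold Ocoact, lift_coact, twisted_coact. expand_tensm. reflexivity. Qed.

Lemma Ocoact_rcoact :
  lcoact Δ (X ⊗ M) ∘ ρ = (idm C ⊗' ρ) ∘ lcoact Δ X ->
  Ocoact Δ x ρ = asc (C ⊗ X) C M ∘ (rcoact Δ x ⊗' idm M) ∘ asci C X M ∘ ρ.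
Proof.
  unfold lcoact, Ocoact, rcoact. intro Hl. rewrite !comp_assoc in Hl.
  rw <- Hl. rw (lcoact_tens _ _ _).
  rw (tensm_comp_r _ _ _ _ (asci C X M) (asc C X M)). rw (asci_asc V _ _ _).
  rw <- (asc_nat V _ _ _ _ _ _ (idm C) x (idm M)). rw <- (pentagon_asci_l _ _ _ _).
  expand_tensm. reflexivity.
Qed.

Lemma Ocoact_counit (ε : hom C unit_ob) (ξ : hom (C ⊗ M) C) :
  ru C ∘ (idm C ⊗' ε) ∘ Δ = idm C ->
  ru X ∘ (idm X ⊗' ε) ∘ x = lu X ∘ (ε ⊗' idm X) ->
  (idm X ⊗' ξ) ∘ asc X C M ∘ (x ⊗' idm M) ∘ asci C X M ∘ ρ = x ->
  ru (C ⊗ X) ∘ (idm (C ⊗ X) ⊗' eprime ε ξ) ∘ Ocoact Δ x ρ = idm (C ⊗ X).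
Proof.
  intros Δ_counit x_counit ρ_counit. unfold eprime, Ocoact. expand_tensm.
  rw <- (asci_nat_r _ _ _ _ ξ). do 4 rw (tensm_comp_r _ _ _ _ _ _). rewrite ρ_counit.
  rw <- (asci_nat_r _ _ _ _ ε). rw (ru_asci _ _).
  do 2 rw (tensm_comp_r _ _ _ _ _ _). rewrite x_counit. expand_tensm.
  rw <- (asc_nat V _ _ _ _ _ _ (idm C) ε (idm X)). rw (triangle V _ _).
  do 2 rw (tensm_comp_l _ _ _ _ _ _). rewrite Δ_counit. normalize_comp. reflexivity.
Qed.

End ComoduleCoaction.

Lemma Ocoact_map {V : MonCat} {C X X' M : V} (Δ : hom C (C ⊗ C))
    (x : hom (C ⊗ X) (X ⊗ C)) (x' : hom (C ⊗ X') (X' ⊗ C))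
    (ρ : hom (C ⊗ X) (C ⊗ (X ⊗ M))) (ρ' : hom (C ⊗ X') (C ⊗ (X' ⊗ M)))
    (f : hom (C ⊗ X) (C ⊗ X')) :
  lcoact Δ (X ⊗ M) ∘ ρ = (idm C ⊗' ρ) ∘ lcoact Δ X ->
  lcoact Δ (X' ⊗ M) ∘ ρ' = (idm C ⊗' ρ') ∘ lcoact Δ X' ->
  rcoact Δ x' ∘ f = (f ⊗' idm C) ∘ rcoact Δ x ->
  ρ' ∘ f = asc C X' M ∘ (f ⊗' idm M) ∘ asci C X M ∘ ρ ->
  Ocoact Δ x' ρ' ∘ f = (f ⊗' idm (C ⊗ M)) ∘ Ocoact Δ x ρ.
Proof.
  intros Hl Hl' f_rcolin f_colin.
  rewrite (Ocoact_rcoact _ _ _ Hl), (Ocoact_rcoact _ _ _ Hl'). normalize_comp.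
  rw f_colin. rw (asci_asc V _ _ _). rw (tensm_comp_l _ _ _ _ (rcoact Δ x') f).
  rw f_rcolin. expand_tensm. rw (asc_nat V _ _ _ _ _ _ _ _ _). reflexivity.
Qed.

Section ComoduleCoassoc.
Context {V : MonCat} {C : V} (Δ : hom C (C ⊗ C)) {X M : V}
  (m : hom (C ⊗ M) (M ⊗ C)) (δ : hom (C ⊗ M) (C ⊗ (M ⊗ M)))
  (x : hom (C ⊗ X) (X ⊗ C)) (ρ : hom (C ⊗ X) (C ⊗ (X ⊗ M))).

Lemma asci_lcolin :
  lcoact Δ (X ⊗ M) ∘ ρ = (idm C ⊗' ρ) ∘ lcoact Δ X ->
  (lcoact Δ X ⊗' idm M) ∘ (asci C X M ∘ ρ)
  = asci C (C ⊗ X) M ∘ (idm C ⊗' (asci C X M ∘ ρ)) ∘ lcoact Δ X.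
Proof.
  unfold lcoact. intro Hl. rewrite !comp_assoc in Hl. expand_tensm.
  rw <- Hl. rw (lcoact_tens _ _ _).
  rw (tensm_comp_r _ _ _ _ (asci C X M) (asc C X M)). rw (asci_asc V _ _ _).
  rw (asci_asc V _ _ _). reflexivity.
Qed.

Lemma asci_rcolin :
  rcoact Δ (tensdl x m) ∘ ρ = (ρ ⊗' idm C) ∘ rcoact Δ x ->
  ((asci C X M ∘ ρ) ⊗' idm C) ∘ rcoact Δ x
  = asci (C ⊗ X) M C ∘ (idm (C ⊗ X) ⊗' m) ∘ asc (C ⊗ X) C M ∘ (rcoact Δ x ⊗' idm M)
      ∘ (asci C X M ∘ ρ).
Proof.
  unfold rcoact, tensdl. intro Hr.
  repeat (rewrite <- tensm_comp_l in Hr || rewrite <- tensm_comp_r in Hr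
          || rewrite comp_assoc in Hr).
  expand_tensm. rw <- Hr. rw (lcoact_tens _ _ _).
  rw (tensm_comp_r _ _ _ _ (asci C X M) (asc C X M)). rw (asci_asc V _ _ _).
  rw <- (asc_nat V _ _ _ _ _ _ (idm C) x (idm M)).
  rw (pentagon_asci_l _ _ _ _). rw <- (asci_nat_r _ _ _ _ m). rw <- (pentagon_inv _ _ _ _).
  reflexivity.
Qed.

Lemma twisted_coact_coassoc (ε : hom C unit_ob) (ξ : hom (C ⊗ M) C) :
  is_rMcomod Δ ε m ξ δ x ρ ->
  asc X (C ⊗ M) (C ⊗ M) ∘ (twisted_coact x ρ ⊗' idm (C ⊗ M))
    ∘ lift_coact Δ (twisted_coact x ρ)
  = (idm X ⊗' Dprime Δ m δ) ∘ twisted_coact x ρ.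
Proof.
  intros [[x_Δ _] [[Hl Hr] [_ ρ_δ]]].
  assert (h1 : (idm X ⊗' Δ) ∘ x = asc X C C ∘ (x ⊗' idm C) ∘ rcoact Δ x).
  { unfold rcoact. rewrite x_Δ. normalize_comp. reflexivity. }
  assert (h3 : (idm X ⊗' δ) ∘ asc X C M ∘ (x ⊗' idm M) ∘ (asci C X M ∘ ρ)
     = asc X C (M ⊗ M) ∘ (x ⊗' idm (M ⊗ M)) ∘ asc (C ⊗ X) M M
         ∘ ((asci C X M ∘ ρ) ⊗' idm M) ∘ (asci C X M ∘ ρ)).
  { normalize_comp. expand_tensm. rewrite ρ_δ. normalize_comp. reflexivity. }
  assert (h5 : asc (C ⊗ X) C M ∘ (rcoact Δ x ⊗' idm M) ∘ (asci C X M ∘ ρ)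
     = asci C X (C ⊗ M) ∘ (idm C ⊗' asc X C M) ∘ (idm C ⊗' (x ⊗' idm M))
         ∘ (idm C ⊗' (asci C X M ∘ ρ)) ∘ lcoact Δ X).
  { rewrite comp_assoc, <- (Ocoact_rcoact _ _ _ Hl).
    unfold Ocoact, lcoact. expand_tensm. reflexivity. }
  assert (h6 : rcoact Δ x = asci C X C ∘ (idm C ⊗' x) ∘ lcoact Δ X).
  { unfold rcoact, lcoact. normalize_comp. reflexivity. }
  pose proof (twisted_coassoc_core Δ m δ x _ _ _ h1 (asci_rcolin Hr) h3 (asci_lcolin Hl)
                h5 h6) as K.
  rewrite <- Ocoact_lift, (Ocoact_rcoact _ _ _ Hl). unfold twisted_coact.
  rewrite !comp_assoc in K. normalize_comp. exact K.
Qed.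

End ComoduleCoassoc.

(* The cowreath axioms are only needed to make [(Dprime, eprime)] a coring; the comodule
   axioms for [Ocoact] and the colinearity of morphisms hold without them. *)
Theorem mainTheorem10 (V : MonCat) (C : V) (Δ : hom C (tens C C)) (ε : hom C unit_ob)
    (M : V) (m : hom (tens C M) (tens M C))
    (ξ : hom (tens C M) C) (δ : hom (tens C M) (tens C (tens M M))) :
  is_coring Δ ε ->
  is_cowreath Δ ε m ξ δ ->
  (forall (X : V) (x : hom (tens C X) (tens X C)) (ρ : hom (tens C X) (tens C (tens X M))),
     is_rMcomod Δ ε m ξ δ x ρ ->
     is_rcomod (Dprime Δ m δ) (eprime ε ξ) (Ocoact Δ x ρ)) /\
  (forall (X X' : V) (x : hom (tens C X) (tens X C)) (x' : hom (tens C X') (tens X' C))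
          (ρ : hom (tens C X) (tens C (tens X M))) (ρ' : hom (tens C X') (tens C (tens X' M)))
          (f : hom (tens C X) (tens C X')),
     is_rMcomod Δ ε m ξ δ x ρ ->
     is_rMcomod Δ ε m ξ δ x' ρ' ->
     is_rMcomod_map Δ x x' ρ ρ' f ->
     is_rcomod_map (Ocoact Δ x ρ) (Ocoact Δ x' ρ') f).
Proof.
  intros [Δ_coassoc [_ Δ_counit]] _. split.
  - intros X x ρ Hρ. split.
    + rewrite Ocoact_lift. apply (lift_coact_coassoc Δ Δ_coassoc).
      exact (twisted_coact_coassoc Δ m δ x ρ ε ξ Hρ).
    + destruct Hρ as [[_ x_counit] [_ [ρ_counit _]]].
      exact (Ocoact_counit Δ x ρ ε ξ Δ_counit x_counit ρ_counit).
  - intros X X' x x' ρ ρ' f [_ [[Hl _] _]] [_ [[Hl' _] _]] [[_ f_rcolin] f_colin].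
    exact (Ocoact_map Δ x x' ρ ρ' f Hl Hl' f_rcolin f_colin).
Qed.
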